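(* Let $\mathcal{P}$ be a ${\rm DLP}^{<}$ program consisting of a single object $o=(oid(o),\Sigma(o))$. Then a set $M$ of ground literals is a (${\rm DLP}^{<}$-)answer set of $\mathcal{P}$ if and only if $M$ is a consistent answer set of the extended disjunctive logic program $\Sigma(o)$ in the sense of Gelfond and Lifschitz.
   Context: Syntax. Fix pairwise disjoint sets of variables, predicates and constants (no function symbols). A literal is an atom $p(t_1,\dots,t_n)$ or its strong negation $\neg p(t_1,\dots,t_n)$; $\neg.L$ denotes the complementary literal of $L$. A rule has the form $a_1\vee\dots\vee a_n \leftarrow b_1,\dots,b_k,\ \mathtt{not}\ b_{k+1},\dots,\mathtt{not}\ b_m$ (in ${\rm DLP}^{<}$ terminated by ''.'' for defeasible or ''!'' for strict; with a single object the marker is irrelevant), $n\ge1$, $m\ge0$; $Head(r)=\{a_1,\dots,a_n\}$, $Body^+(r)=\{b_1,\dots,b_k\}$, $Body^-(r)=\{b_{k+1},\dots,b_m\}$. A ${\rm DLP}^{<}$ program is a set of objects $(oid(o),\Sigma(o))$ (identifier, set of rules), partially ordered by a strict order $<$ on identifiers. ${\rm DLP}^{<}$ semantics. $B_{\mathcal{P}}$: all ground literals (positive and negative) from predicates of $\mathcal{P}$ and constants appearing in $\mathcal{P}$. $ground(\mathcal{P})$: multiset of ground instances of rules of all objects, each tagged with its object $obj\_of(r)$. An interpretation is a subset of $B_{\mathcal{P}}$ without complementary pair. Head of $r$ true in $I$: some head literal in $I$; body true: $Body^+(r)\subseteq I$, $Body^-(r)\cap I=\emptyset$; $r$ satisfied: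 head true or body not true. $r_1$ threatens $r_2$ on $L$ if $\neg.L\in Head(r_1)$, $L\in Head(r_2)$, $obj\_of(r_1)<obj\_of(r_2)$, $r_2$ defeasible; $r_1$ overrides $r_2$ on $L$ in $I$ if moreover $\neg.L\in I$ and the body of $r_2$ is true in $I$; $r$ is overridden in $I$ if every $L\in Head(r)$ is overridden by some rule. $I$ is a model of $\mathcal{P}$ if every rule of $ground(\mathcal{P})$ is satisfied or overridden. $G_I(\mathcal{P})$: from $ground(\mathcal{P})$ remove rules overridden in $I$, remove rules with $Body^-(r)\cap I\neq\emptyset$, delete all $\mathtt{not}$-parts. $pos(S)$ regards each $\neg p$ as a fresh positive predicate. A model $M$ of $\mathcal{P}$ is a ${\rm DLP}^{<}$-answer set if it is a subset-minimal model of $pos(G_M(\mathcal{P}))$. Gelfond–Lifschitz answer sets. Let $\Pi$ be a set of such rules (ground instances taken over its constants) and $Lit$ the set of all ground literals. For a $\mathtt{not}$-free $\Pi$, a set $S\subseteq Lit$ is an answer set if it is a subset-minimal set such that (i) for each ground rule, if $Body^+(r)\subseteq S$ then $Head(r)\cap S\neq\emptyset$, and (ii) if $S$ contains a complementary pair then $S=Lit$. For general $\Pi$ and $S\subseteq Lit$, $\Pi^S$ is obtained from the ground instances of $\Pi$ by deleting every rule with some $b\in Body^-(r)\cap S$ and deleting the $\mathtt{not}$-parts of the remaining rules; $S$ is an answer set of $\Pi$ if it is an answer set of $\Pi^S$. It is consistent if it contains no complementary pair. *)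

From Stdlib Require Import List.
Import ListNotations.

Set Implicit Arguments.
Unset Strict Implicit.

Section DLP.
(* V = variables, C = constants, Pr = predicates, Oid = object identifiers.
   Distinct types, hence pairwise disjoint. No function symbols. *)
Variables (V C Pr Oid : Type).

Inductive term : Type := TVar (v : V) | TConst (c : C).

(* lsign = true : atom p(t1..tn); lsign = false : strong negation ~p(t1..tn) *)
Record lit : Type := Lit { lsign : bool; lpred : Pr; largs : list term }.

(* rstrict = true : strict rule ("!"), false : defeasible rule (".") *)
Record rule : Type := Rule {
  rhead : list lit; rpos : list lit; rneg : list lit; rstrict : bool }.

Record object : Type := Obj { oid : Oid; osigma : list rule }.

Record program : Type := Prog { objs : list object; olt : Oid -> Oid -> Prop }.

Definition rule_lits (r : rule) : list lit := rhead r ++ rpos r ++ rneg r.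

Definition term_vars (t : term) : list V :=
  match t with TVar v => [v] | TConst _ => [] end.
Definition lit_vars (L : lit) : list V := flat_map term_vars (largs L).
Definition rule_vars (r : rule) : list V := flat_map lit_vars (rule_lits r).

Definition wf_program (P : program) : Prop :=
  (forall x, ~ olt P x x) /\
  (forall x y z, olt P x y -> olt P y z -> olt P x z) /\
  (forall o r, In o (objs P) -> In r (osigma o) -> rhead r <> []).

Definition prog_rules (P : program) : list rule := flat_map osigma (objs P).

Record glit : Type := GLit { gsign : bool; gpred : Pr; gargs : list C }.

Definition compl (l : glit) : glit := GLit (negb (gsign l)) (gpred l) (gargs l).

Record grule : Type := GRule {
  ghead : list glit; gpos : list glit; gneg : list glit; gstrict : bool }.

Definition consts_of (rs : list rule) (c : C) : Prop :=
  exists r L, In r rs /\ In L (rule_lits r) /\ In (TConst c) (largs L).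

Definition lang (rs : list rule) (l : glit) : Prop :=
  (exists r L, In r rs /\ In L (rule_lits r) /\ lpred L = gpred l /\
     length (largs L) = length (gargs l)) /\
  (forall c, In c (gargs l) -> consts_of rs c).

Definition subst_term (th : V -> C) (t : term) : C :=
  match t with TVar v => th v | TConst c => c end.
Definition subst_lit (th : V -> C) (L : lit) : glit :=
  GLit (lsign L) (lpred L) (map (subst_term th) (largs L)).
Definition subst_rule (th : V -> C) (r : rule) : grule :=
  GRule (map (subst_lit th) (rhead r)) (map (subst_lit th) (rpos r))
        (map (subst_lit th) (rneg r)) (rstrict r).

Definition ground_inst (rs : list rule) (r : rule) (g : grule) : Prop :=
  exists th : V -> C,
    (forall v, In v (rule_vars r) -> consts_of rs (th v)) /\ g = subst_rule th r.

Definition gset := glit -> Prop.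
Definition subset (A B : gset) : Prop := forall l, A l -> B l.
Definition consistent (S : gset) : Prop := forall l, ~ (S l /\ S (compl l)).

(* positive (not-free) ground rules: (head, positive body) *)
Definition prule : Type := (list glit * list glit)%type.

(* X is a model of the positive program Q, where ~p is regarded as a fresh
   positive predicate (pos(.)): no consistency requirement *)
Definition pos_model (Q : prule -> Prop) (X : gset) : Prop :=
  forall h b, Q (h, b) -> (forall x, In x b -> X x) -> exists a, In a h /\ X a.

Definition B_P (P : program) : gset := lang (prog_rules P).

(* ground(P): ground instances tagged with their object *)
Definition ginst (P : program) (o : object) (g : grule) : Prop :=
  In o (objs P) /\ exists r, In r (osigma o) /\ ground_inst (prog_rules P) r g.

Definition interpretation (P : program) (I : gset) : Prop :=
  subset I (B_P P) /\ consistent I.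

Definition head_true (I : gset) (g : grule) : Prop :=
  exists L, In L (ghead g) /\ I L.
Definition body_true (I : gset) (g : grule) : Prop :=
  (forall b, In b (gpos g) -> I b) /\ (forall b, In b (gneg g) -> ~ I b).
Definition satisfied (I : gset) (g : grule) : Prop :=
  head_true I g \/ ~ body_true I g.

Definition threatens (P : program) (o1 : object) (r1 : grule)
    (o2 : object) (r2 : grule) (L : glit) : Prop :=
  In (compl L) (ghead r1) /\ In L (ghead r2) /\ olt P (oid o1) (oid o2) /\
  gstrict r2 = false.

Definition overrides (P : program) (I : gset) (o1 : object) (r1 : grule)
    (o2 : object) (r2 : grule) (L : glit) : Prop :=
  threatens P o1 r1 o2 r2 L /\ I (compl L) /\ body_true I r2.

Definition overridden (P : program) (I : gset) (o : object) (r : grule) : Prop :=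
  forall L, In L (ghead r) ->
    exists o1 r1, ginst P o1 r1 /\ overrides P I o1 r1 o r L.

Definition is_model (P : program) (I : gset) : Prop :=
  interpretation P I /\
  forall o g, ginst P o g -> satisfied I g \/ overridden P I o g.

Definition GI (P : program) (I : gset) (q : prule) : Prop :=
  exists o g, ginst P o g /\ ~ overridden P I o g /\
    (forall x, In x (gneg g) -> ~ I x) /\ q = (ghead g, gpos g).

Definition dlp_answer_set (P : program) (M : gset) : Prop :=
  is_model P M /\ pos_model (GI P M) M /\
  (forall X, subset X M -> pos_model (GI P M) X -> subset M X).

Definition Lit_of (rs : list rule) : gset := lang rs.

Definition gl_reduct (rs : list rule) (S : gset) (q : prule) : Prop :=
  exists r g, In r rs /\ ground_inst rs r g /\
    (forall x, In x (gneg g) -> ~ S x) /\ q = (ghead g, gpos g).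

(* conditions (i) and (ii) for a not-free ground program *)
Definition gl_closed (rs : list rule) (Q : prule -> Prop) (S : gset) : Prop :=
  pos_model Q S /\
  ((exists l, S l /\ S (compl l)) -> forall l, S l <-> Lit_of rs l).

Definition gl_answer_set (rs : list rule) (S : gset) : Prop :=
  subset S (Lit_of rs) /\
  gl_closed rs (gl_reduct rs S) S /\
  (forall T, subset T (Lit_of rs) -> subset T S ->
     gl_closed rs (gl_reduct rs S) T -> subset S T).

End DLP.

(* With a single object the order on identifiers is irreflexive, so no ground
   rule can be threatened, let alone overridden.  Hence G_M(P) is exactly the
   Gelfond-Lifschitz reduct of Sigma(o) by M, the model condition follows from
   M being closed under that reduct, and for a consistent M condition (ii) of
   a Gelfond-Lifschitz answer set is vacuous, for M and for its subsets. *)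
From Stdlib Require Import List Classical.
Import ListNotations.

Set Implicit Arguments.
Unset Strict Implicit.

Section GeneralFacts.
Variables (V C Pr Oid : Type).

Lemma consistent_subset (X S : gset C Pr) :
  subset X S -> consistent S -> consistent X.
Proof. intros HXS HS l [Hl Hcl]. exact (HS l (conj (HXS _ Hl) (HXS _ Hcl))). Qed.

Lemma gl_closed_consistent {rs : list (rule V C Pr)} {Q : prule C Pr -> Prop}
  {S : gset C Pr} :
  consistent S -> (gl_closed rs Q S <-> pos_model Q S).
Proof.
  intros HS; split.
  - intros [HQ _]; exact HQ.
  - intros HQ; split; [exact HQ|].
    intros [l Hl]; exfalso; exact (HS l Hl).
Qed.

Lemma pos_model_ext (Q1 Q2 : prule C Pr -> Prop) (X : gset C Pr) :
  (forall q, Q1 q <-> Q2 q) -> (pos_model Q1 X <-> pos_model Q2 X).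
Proof.
  intros HQ; split; intros HX h b Hq; apply HX; apply HQ; exact Hq.
Qed.

Lemma is_model_of_reduct_model (P : program V C Pr Oid) (M : gset C Pr) :
  interpretation P M -> pos_model (GI P M) M -> is_model P M.
Proof.
  intros HI HM; split; [exact HI|].
  intros o g Hg.
  destruct (classic (overridden P M o g)) as [Hov|Hnov]; [right; exact Hov|left].
  destruct (classic (body_true M g)) as [[Hpos Hneg]|Hnb]; [left|right; exact Hnb].
  assert (Hq : GI P M (ghead g, gpos g)) by (exists o, g; auto).
  exact (HM _ _ Hq Hpos).
Qed.

End GeneralFacts.

Section SingleObject.
Variables (V C Pr Oid : Type) (P : program V C Pr Oid) (o : object V C Pr Oid).
Hypothesis (Hwf : wf_program P) (Hobjs : objs P = [o]).

Lemma prog_rules_single : prog_rules P = osigma o.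
Proof. unfold prog_rules; rewrite Hobjs; apply app_nil_r. Qed.

Lemma interpretation_single (M : gset C Pr) :
  interpretation P M <-> subset M (lang (osigma o)) /\ consistent M.
Proof. unfold interpretation, B_P; rewrite prog_rules_single; reflexivity. Qed.

Lemma ginst_single (o' : object V C Pr Oid) (g : grule C Pr) :
  ginst P o' g <->
  o' = o /\ exists r, In r (osigma o) /\ ground_inst (osigma o) r g.
Proof.
  unfold ginst; rewrite Hobjs, prog_rules_single; simpl.
  split.
  - intros [[<-|[]] Hr]; auto.
  - intros [-> Hr]; auto.
Qed.

Lemma ginst_not_overridden (M : gset C Pr) (o' : object V C Pr Oid)
  (g : grule C Pr) :
  ginst P o' g -> ~ overridden P M o' g.
Proof.
  destruct Hwf as [Hirr [_ Hhead]].
  intros Hg Hov.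
  assert (Ho' := Hg); apply ginst_single in Ho' as [-> _].
  destruct Hg as [Hin [r [Hr [th [_ ->]]]]].
  (* A rule with empty head would be vacuously overridden. *)
  destruct (rhead r) as [|L hs] eqn:Ehead; [exact (Hhead o r Hin Hr Ehead)|].
  assert (HL : In (subst_lit th L) (ghead (subst_rule th r)))
    by (simpl; rewrite Ehead; left; reflexivity).
  destruct (Hov _ HL) as [o1 [r1 [Hg1 [[_ [_ [Hlt _]]] _]]]].
  apply ginst_single in Hg1 as [-> _].
  exact (Hirr _ Hlt).
Qed.

Lemma GI_single (M : gset C Pr) (q : prule C Pr) :
  GI P M q <-> gl_reduct (osigma o) M q.
Proof.
  split.
  - intros [o' [g [Hg [_ [Hneg ->]]]]].
    apply ginst_single in Hg as [_ [r [Hr Hgr]]].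
    exists r, g; auto.
  - intros [r [g [Hr [Hgr [Hneg ->]]]]].
    assert (Hg : ginst P o g) by (apply ginst_single; eauto).
    exists o, g; split; [exact Hg|].
    split; [exact (ginst_not_overridden Hg)|auto].
Qed.

Lemma pos_model_GI_single (M X : gset C Pr) :
  pos_model (GI P M) X <-> pos_model (gl_reduct (osigma o) M) X.
Proof. apply pos_model_ext; exact (GI_single M). Qed.

End SingleObject.

Theorem theorem6p1 (V C Pr Oid : Type) (P : program V C Pr Oid)
  (o : object V C Pr Oid) :
  wf_program P -> objs P = [o] ->
  forall M : gset C Pr,
    dlp_answer_set P M <-> (gl_answer_set (osigma o) M /\ consistent M).
Proof.
  intros Hwf Hobjs M.
  pose proof (pos_model_GI_single Hwf Hobjs M) as Hreduct.
  unfold dlp_answer_set, gl_answer_set, Lit_of.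
  split.
  - intros [[HI _] [HM Hmin]].
    apply (interpretation_single Hobjs) in HI as [Hsub Hcons].
    split; [split; [exact Hsub|split]|exact Hcons].
    + apply (gl_closed_consistent Hcons), Hreduct, HM.
    + intros T _ HTM HT.
      apply Hmin; [exact HTM|].
      apply Hreduct,
        (gl_closed_consistent (rs := osigma o) (consistent_subset HTM Hcons)), HT.
  - intros [[Hsub [HM Hmin]] Hcons].
    apply (gl_closed_consistent Hcons), Hreduct in HM.
    split; [|split; [exact HM|]].
    + apply is_model_of_reduct_model; [apply (interpretation_single Hobjs)|]; auto.
    + intros X HXM HX.
      apply Hmin; [intros l Hl; apply Hsub, HXM, Hl | exact HXM |].
      apply (gl_closed_consistent (consistent_subset HXM Hcons)), Hreduct, HX.
Qed.
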